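(* Let $M>0$, $T>0$, $X=[0,M]$ periodic, and fix $n\in\mathbf N$, $n\ge4$. Let $a,b$ be functions on $X\times[0,T]$, periodic in $x$, with $a\in C([0,T];C^{n+3})$, $a_t\in C([0,T];C^n)$, $b\in C([0,T];C^{n+2})$, $b_t\in C([0,T];C^n)$, and suppose there is $a_0>0$ with $a(x,t)\ge a_0$ for all $x,t$, and that $\bar\delta(t):=\frac1M\int_0^M\frac{b(y,t)}{|a(y,t)|}dy\ge0$ for all $t\in[0,T]$. (The lower-order coefficients $c,d\in C([0,T];C^n)$, $e\in L^\infty([0,T];H^n)$ play no role.) Define $$g_n(x,t):=\big(a(x,t)\big)^{1/2-n/3}\exp\Big[-\frac13\int_0^x\Big(\frac{b(y,t)}{a(y,t)}-\bar\delta(t)\Big)dy\Big].$$ Then $g_n$ satisfies: (C1) there is a constant $k_g>1$ with $k_g^{-1}\le g_n(x,t)\le k_g$ for all $x,t$; (C2) $g_n\in C([0,T];C^{n+3})$ and $\partial_tg_n\in C([0,T];C^n)$; (C3) $g_n$ and its first $n$ derivatives satisfy periodic boundary conditions; (C4) $\big(\tfrac32-n\big)a_x-b-3a\frac{\partial_xg_n}{g_n}\le0$ for all $x\in X$, $t\in[0,T]$.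
   Context: $C^k$ and $H^n$ denote spaces of $M$-periodic functions on $X$. *)

From Stdlib Require Import Reals.
From Coquelicot Require Import Coquelicot.
Open Scope R_scope.

(* f is M-periodic on R (models a function on the periodic interval X = [0,M]). *)
Definition periodic (M : R) (f : R -> R) : Prop := forall x, f (x + M) = f x.

Definition Ck (M : R) (k : nat) (f : R -> R) : Prop :=
  periodic M f /\
  (forall j, (j <= k)%nat -> forall x, ex_derive_n f j x) /\
  (forall x, continuous (Derive_n f k) x).

(* u : R -> R -> R, u x t.  u belongs to C([0,T]; C^k): every time slice is in C^k,
   and t |-> u(.,t) is continuous on [0,T] for the C^k norm
   (sup norms of the x-derivatives of order 0..k). *)
Definition CtCk (M T : R) (k : nat) (u : R -> R -> R) : Prop :=
  (forall t, 0 <= t <= T -> Ck M k (fun x => u x t)) /\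
  (forall j, (j <= k)%nat -> forall t0, 0 <= t0 <= T ->
     forall eps, 0 < eps -> exists delta, 0 < delta /\
       forall t, 0 <= t <= T -> Rabs (t - t0) < delta ->
         forall x, Rabs (Derive_n (fun y => u y t) j x
                         - Derive_n (fun y => u y t0) j x) <= eps).

Definition tderiv (T : R) (u ut : R -> R -> R) : Prop :=
  forall x t, 0 <= t <= T ->
    forall eps, 0 < eps -> exists delta, 0 < delta /\
      forall s, 0 <= s <= T -> 0 < Rabs (s - t) < delta ->
        Rabs ((u x s - u x t) / (s - t) - ut x t) <= eps.

Definition deltabar (M : R) (a b : R -> R -> R) (t : R) : R :=
  / M * RInt (fun y => b y t / Rabs (a y t)) 0 M.

Definition gn (M : R) (n : nat) (a b : R -> R -> R) (x t : R) : R :=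
  Rpower (a x t) (1/2 - INR n / 3) *
  exp (- (1/3) * RInt (fun y => b y t / a y t - deltabar M a b t) 0 x).

(* Write p = 1/2 - n/3 and h = b/a - deltabar, so that
     g_n = exp (p ln a) * exp (-(1/3) * int_0^x h).
   The normalisation of deltabar makes h mean zero over a period, so int_0^x h is again
   M-periodic.  The class C([0,T]; C^k), described through a chain of x-derivatives, is
   closed under sums, products, inverses and logarithms of functions bounded below,
   exponentials, and primitives of mean-zero functions; this gives (C2) and, by
   periodicity of all x-derivatives, (C3).  Time derivatives follow from the product and
   chain rules and differentiation under the integral sign.  (C1) holds because the
   exponent is bounded, by periodicity in x and compactness of [0,T].  Finally
   d_x g_n / g_n = p a_x / a - h / 3, and since 3 p = 3/2 - n the left-hand side of (C4)
   equals - a deltabar <= 0. *)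

From Stdlib Require Import Reals Lra Lia ZArith ClassicalEpsilon Classical FunctionalExtensionality.
From Coquelicot Require Import Coquelicot.
Open Scope R_scope.

(* Coquelicot states its algebraic rules with the [plus]/[mult]/[scal] of an abstract
   ring or module; these instances use R's own operations, so that [apply] unifies. *)
Lemma is_derive_id_R (x : R) : is_derive (fun y => y) x 1.
Proof. exact (is_derive_id x). Qed.

Lemma is_derive_const_R (c x : R) : is_derive (fun _ => c) x 0.
Proof. exact (is_derive_const c x). Qed.

Lemma is_derive_plus_R (f g : R -> R) x df dg :
  is_derive f x df -> is_derive g x dg -> is_derive (fun y => f y + g y) x (df + dg).
Proof. exact (is_derive_plus f g x df dg). Qed.

Lemma is_derive_opp_R (f : R -> R) x df :
  is_derive f x df -> is_derive (fun y => - f y) x (- df).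
Proof. exact (is_derive_opp f x df). Qed.

Lemma is_derive_mult_R (f g : R -> R) x df dg :
  is_derive f x df -> is_derive g x dg ->
  is_derive (fun y => f y * g y) x (df * g x + f x * dg).
Proof. intros Hf Hg. exact (is_derive_mult f g x df dg Hf Hg Rmult_comm). Qed.

Lemma is_derive_comp_R (f g : R -> R) x df dg :
  is_derive f (g x) df -> is_derive g x dg -> is_derive (fun y => f (g y)) x (df * dg).
Proof. intros Hf Hg. rewrite Rmult_comm. exact (is_derive_comp f g x df dg Hf Hg). Qed.

Lemma is_derive_continuity_pt (f : R -> R) x l : is_derive f x l -> continuity_pt f x.
Proof.
  intros H. apply is_derive_Reals in H. apply derivable_continuous_pt. exists l; exact H.
Qed.

Lemma is_derive_continuous_R (f : R -> R) x l : is_derive f x l -> continuous f x.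
Proof. intros H. apply continuity_pt_filterlim. exact (is_derive_continuity_pt f x l H). Qed.

Lemma continuous_plus_R (f g : R -> R) x :
  continuous f x -> continuous g x -> continuous (fun y => f y + g y) x.
Proof. exact (continuous_plus f g x). Qed.

Lemma continuous_opp_R (f : R -> R) x : continuous f x -> continuous (fun y => - f y) x.
Proof. exact (continuous_opp f x). Qed.

Lemma continuous_mult_R (f g : R -> R) x :
  continuous f x -> continuous g x -> continuous (fun y => f y * g y) x.
Proof. exact (continuous_mult f g x). Qed.

Lemma ex_RInt_continuous_R (f : R -> R) a b : (forall y, continuous f y) -> ex_RInt f a b.
Proof. intros H. apply (ex_RInt_continuous (V := R_CompleteNormedModule)); auto. Qed.

Lemma RInt_minus_R (f g : R -> R) a b : ex_RInt f a b -> ex_RInt g a b ->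
  RInt (fun y => f y - g y) a b = RInt f a b - RInt g a b.
Proof. exact (RInt_minus f g a b). Qed.

Lemma RInt_mult_const_r (f : R -> R) a b c :
  ex_RInt f a b -> RInt (fun y => f y * c) a b = RInt f a b * c.
Proof.
  intros H. transitivity (RInt (fun y => scal c (f y)) a b).
  - apply RInt_ext. intros. apply Rmult_comm.
  - rewrite (RInt_scal (V := R_CompleteNormedModule)) by exact H. apply Rmult_comm.
Qed.

Lemma abs_RInt_0_le_const (f : R -> R) x K : (forall u v, ex_RInt f u v) ->
  (forall y, Rabs (f y) <= K) -> Rabs (RInt f 0 x) <= Rabs x * K.
Proof.
  intros Hex Hb. destruct (Rle_dec 0 x) as [Hx | Hx].
  - rewrite (Rabs_pos_eq x) by lra. replace (x * K) with ((x - 0) * K) by ring.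
    apply abs_RInt_le_const; auto.
  - rewrite <- (opp_RInt_swap f x 0) by auto.
    change (Rabs (- RInt f x 0) <= Rabs x * K).
    rewrite Rabs_Ropp, (Rabs_left x) by lra. replace (- x * K) with ((0 - x) * K) by ring.
    apply abs_RInt_le_const; auto; lra.
Qed.

Lemma is_derive_approx (f : R -> R) y l : is_derive f y l ->
  forall eps, 0 < eps -> exists eta, 0 < eta /\
    forall z, Rabs (z - y) < eta -> Rabs (f z - f y - l * (z - y)) <= eps * Rabs (z - y).
Proof.
  intros H eps Heps. apply is_derive_Reals in H.
  destruct (H eps Heps) as (d & Hd). exists d; split; [apply cond_pos |].
  intros z Hz. destruct (Req_dec z y) as [-> | Hne].
  - rewrite !Rminus_diag, Rmult_0_r, Rminus_0_r, Rabs_R0. lra.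
  - specialize (Hd (z - y) ltac:(lra) Hz). replace (y + (z - y)) with z in Hd by ring.
    replace (f z - f y - l * (z - y)) with (((f z - f y) / (z - y) - l) * (z - y))
      by (field; lra).
    rewrite Rabs_mult. apply Rmult_le_compat_r; [apply Rabs_pos | lra].
Qed.

(** * Periodicity and compactness *)

Lemma periodic_shift_nat M f : periodic M f -> forall n x, f (x + INR n * M) = f x.
Proof.
  intros Hp n; induction n as [| n IH]; intros x.
  - simpl. f_equal. ring.
  - rewrite S_INR. replace (x + (INR n + 1) * M) with (x + INR n * M + M) by ring.
    rewrite Hp. apply IH.
Qed.

Lemma periodic_shift M f : periodic M f -> forall k x, f (x + IZR k * M) = f x.
Proof.
  intros Hp k x. destruct (Z_le_gt_dec 0 k) as [Hk | Hk].
  - rewrite <- (Z2Nat.id k), <- INR_IZR_INZ by lia. apply (periodic_shift_nat M f Hp).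
  - rewrite <- (periodic_shift_nat M f Hp (Z.to_nat (- k))), INR_IZR_INZ, Z2Nat.id by lia.
    rewrite opp_IZR. f_equal. ring.
Qed.

Lemma periodic_reduce M : 0 < M -> forall x, exists y k, 0 <= y <= M /\ x = y + IZR k * M.
Proof.
  intros HM x. destruct (archimed (x / M)) as [H1 H2].
  set (k := (up (x / M) - 1)%Z).
  assert (Hk : IZR k <= x / M < IZR k + 1) by (unfold k; rewrite minus_IZR; lra).
  assert (HkM : IZR k * M <= x < IZR k * M + M).
  { replace x with (x / M * M) by (field; lra). split; nra. }
  exists (x - IZR k * M), k. split; [lra | ring].
Qed.

Lemma periodic_representative M f : 0 < M -> periodic M f ->
  forall x, exists y, 0 <= y <= M /\ f x = f y.
Proof.
  intros HM Hp x. destruct (periodic_reduce M HM x) as (y & k & Hy & ->).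
  exists y. split; [exact Hy | apply (periodic_shift M f Hp)].
Qed.

Lemma periodic_continuous_bounded M f : 0 < M -> periodic M f ->
  (forall x, continuous f x) -> exists B, forall x, Rabs (f x) <= B.
Proof.
  intros HM Hp Hc.
  assert (Hc' : forall x, 0 <= x <= M -> continuity_pt f x)
    by (intros x _; apply continuity_pt_filterlim, Hc).
  destruct (continuity_ab_maj f 0 M ltac:(lra) Hc') as (xmax & Hmax & _).
  destruct (continuity_ab_min f 0 M ltac:(lra) Hc') as (xmin & Hmin & _).
  exists (Rmax (Rabs (f xmax)) (Rabs (f xmin))). intros x.
  destruct (periodic_representative M f HM Hp x) as (y & Hy & ->).
  specialize (Hmax y Hy). specialize (Hmin y Hy).
  unfold Rabs, Rmax; repeat destruct Rcase_abs; repeat destruct Rle_dec; lra.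
Qed.

(* The bounds [B] of [P t B] are propagated from 0 to T along the Lebesgue number of the
   cover of [0,T] by the neighbourhoods on which a local bound is known. *)
Lemma bound_of_local_bounds T (P : R -> R -> Prop) : 0 < T ->
  (forall t B B', B <= B' -> P t B -> P t B') ->
  (forall t0, 0 <= t0 <= T -> exists d, 0 < d /\
     exists B, forall t, 0 <= t <= T -> Rabs (t - t0) < d -> P t B) ->
  exists B, forall t, 0 <= t <= T -> P t B.
Proof.
  intros HT Hmono Hloc.
  assert (Hloc' : forall t0, exists d : posreal, 0 <= t0 <= T ->
     exists B, forall t, 0 <= t <= T -> Rabs (t - t0) < d -> P t B).
  { intros t0. destruct (Rle_dec 0 t0), (Rle_dec t0 T).
    1: destruct (Hloc t0 ltac:(lra)) as (d & Hd & HB); exists (mkposreal d Hd); auto.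
    all: exists (mkposreal 1 Rlt_0_1); intros; lra. }
  destruct (choice _ Hloc') as (delta & Hdelta).
  destruct (compactness_value_1d 0 T (fun t => pos_div_2 (delta t))) as (d & Hd).
  assert (Hstep : forall k : nat, exists B, forall t, 0 <= t <= T -> t <= INR k * d -> P t B).
  { induction k as [| k (B1 & HB1)].
    - destruct (Hdelta 0 ltac:(lra)) as (B & HB). exists B. intros t Ht Ht0.
      apply HB; auto. simpl in Ht0. rewrite Rminus_0_r, Rabs_pos_eq by lra.
      pose proof (cond_pos (delta 0)). lra.
    - destruct (Rlt_dec T (INR k * d)) as [Hlt | Hge].
      { exists B1. intros t Ht _. apply HB1; lra. }
      assert (Hkd : 0 <= INR k * d <= T).
      { split; [| lra]. apply Rmult_le_pos; [apply pos_INR | apply Rlt_le, cond_pos]. }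
      apply NNPP. intros Hno. apply (Hd _ Hkd). intros (t' & Ht' & Hct' & Hdt').
      apply Hno. destruct (Hdelta t' Ht') as (B2 & HB2).
      exists (Rmax B1 B2). intros t Ht Htk. rewrite S_INR in Htk.
      destruct (Rle_dec t (INR k * d)).
      + apply Hmono with B1; [apply Rmax_l | apply HB1; auto].
      + apply Hmono with B2; [apply Rmax_r |]. apply HB2; auto.
        simpl in Hct', Hdt'. unfold Rabs in *; repeat destruct Rcase_abs; lra. }
  assert (Hpos : 0 < T / d) by (apply Rdiv_lt_0_compat; [lra | apply cond_pos]).
  destruct (archimed (T / d)) as [Hup _].
  destruct (Hstep (Z.to_nat (up (T / d)))) as (B & HB). exists B. intros t Ht.
  apply HB; auto. rewrite INR_IZR_INZ, Z2Nat.id by (apply le_IZR; lra).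
  assert (Hd0 := cond_pos d).
  replace T with (T / d * d) in Ht by (field; lra). nra.
Qed.

(** * The classes C([0,T]; C^k) *)

Section SpaceTime.
Variables (M T : R) (HM : 0 < M) (HT : 0 < T).

Local Notation in_time t := (0 <= t <= T).

Definition unif_tcont (u : R -> R -> R) : Prop :=
  forall t0, in_time t0 -> forall eps, 0 < eps -> exists delta, 0 < delta /\
    forall t, in_time t -> Rabs (t - t0) < delta -> forall x, Rabs (u x t - u x t0) <= eps.

(* [CT k u] models C([0,T]; C^k) through a chain of explicit x-derivatives. *)
Definition CT0 (u : R -> R -> R) : Prop :=
  (forall t, in_time t -> forall x, u (x + M) t = u x t) /\
  (forall t, in_time t -> forall x, continuous (fun y => u y t) x) /\
  unif_tcont u.

Fixpoint CT (k : nat) (u : R -> R -> R) : Prop :=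
  match k with
  | O => CT0 u
  | S k => CT0 u /\ exists ux,
      (forall t, in_time t -> forall x, is_derive (fun y => u y t) x (ux x t)) /\ CT k ux
  end.

Lemma CT0_bounded u :
  CT0 u -> exists B, 0 < B /\ forall t, in_time t -> forall x, Rabs (u x t) <= B.
Proof.
  intros (Hp & Hc & Hu).
  destruct (bound_of_local_bounds T (fun t B => forall x, Rabs (u x t) <= B) HT) as (B & HB).
  - intros t B B' HBB' H x. specialize (H x). lra.
  - intros t0 Ht0.
    destruct (periodic_continuous_bounded M (fun y => u y t0) HM (Hp t0 Ht0) (Hc t0 Ht0))
      as (B0 & HB0).
    destruct (Hu t0 Ht0 1 Rlt_0_1) as (d & Hd & Hd').
    exists d; split; [exact Hd |]. exists (B0 + 1). intros t Ht Htt x.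
    specialize (Hd' t Ht Htt x). specialize (HB0 x).
    unfold Rabs in *; repeat destruct Rcase_abs; lra.
  - exists (Rabs B + 1). split; [pose proof (Rabs_pos B); lra |].
    intros t Ht x. specialize (HB t Ht x). pose proof (Rle_abs B); lra.
Qed.

Lemma CT0_ext u v : (forall x t, in_time t -> u x t = v x t) -> CT0 u -> CT0 v.
Proof.
  intros He (Hp & Hc & Hu). split; [| split].
  - intros t Ht x. rewrite <- !He by exact Ht. auto.
  - intros t Ht x. apply (continuous_ext (fun y => u y t)); auto.
  - intros t0 Ht0 eps Heps. destruct (Hu t0 Ht0 eps Heps) as (d & Hd & Hd').
    exists d; split; [exact Hd |]. intros t Ht Htt x. rewrite <- !He by auto. auto.
Qed.

Lemma CT0_plus u v : CT0 u -> CT0 v -> CT0 (fun x t => u x t + v x t).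
Proof.
  intros (Hp & Hc & Hu) (Hp' & Hc' & Hu'). split; [| split].
  - intros t Ht x. rewrite Hp, Hp'; auto.
  - intros t Ht x. apply continuous_plus_R; auto.
  - intros t0 Ht0 eps Heps.
    destruct (Hu t0 Ht0 (eps / 2) ltac:(lra)) as (d & Hd & Hd').
    destruct (Hu' t0 Ht0 (eps / 2) ltac:(lra)) as (d' & Hd2 & Hd2').
    exists (Rmin d d'); split; [apply Rmin_pos; auto |].
    intros t Ht Htt x. pose proof (Rmin_l d d'). pose proof (Rmin_r d d').
    specialize (Hd' t Ht ltac:(lra) x). specialize (Hd2' t Ht ltac:(lra) x).
    replace (u x t + v x t - (u x t0 + v x t0)) with ((u x t - u x t0) + (v x t - v x t0))
      by ring.
    pose proof (Rabs_triang (u x t - u x t0) (v x t - v x t0)); lra.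
Qed.

Lemma CT0_mult u v : CT0 u -> CT0 v -> CT0 (fun x t => u x t * v x t).
Proof.
  intros Gu Gv.
  destruct (CT0_bounded u Gu) as (Bu & HBu & HBu').
  destruct (CT0_bounded v Gv) as (Bv & HBv & HBv').
  destruct Gu as (Hp & Hc & Hu), Gv as (Hp' & Hc' & Hu'). split; [| split].
  - intros t Ht x. rewrite Hp, Hp'; auto.
  - intros t Ht x. apply continuous_mult_R; auto.
  - intros t0 Ht0 eps Heps.
    set (e := eps / (Bu + Bv)).
    assert (He : 0 < e) by (apply Rdiv_lt_0_compat; lra).
    destruct (Hu t0 Ht0 e He) as (d & Hd & Hd').
    destruct (Hu' t0 Ht0 e He) as (d' & Hd2 & Hd2').
    exists (Rmin d d'); split; [apply Rmin_pos; auto |].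
    intros t Ht Htt x. pose proof (Rmin_l d d'). pose proof (Rmin_r d d').
    specialize (Hd' t Ht ltac:(lra) x). specialize (Hd2' t Ht ltac:(lra) x).
    replace (u x t * v x t - u x t0 * v x t0) with
      (u x t * (v x t - v x t0) + v x t0 * (u x t - u x t0)) by ring.
    eapply Rle_trans; [apply Rabs_triang |]. rewrite !Rabs_mult.
    replace eps with (Bu * e + Bv * e) by (unfold e; field; lra).
    apply Rplus_le_compat; apply Rmult_le_compat; try apply Rabs_pos; auto.
Qed.

Lemma CT0_tfun (c : R -> R) : unif_tcont (fun _ t => c t) -> CT0 (fun _ t => c t).
Proof. intros Hc. split; [| split]; [auto | intros; apply continuous_const | exact Hc]. Qed.

Lemma CT0_const c : CT0 (fun _ _ => c).
Proof.
  apply (CT0_tfun (fun _ => c)). intros t0 _ eps Heps. exists 1; split; [lra |].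
  intros. rewrite Rminus_diag, Rabs_R0; lra.
Qed.

(* Uniform continuity of [f] on the compact range [[c, B]] of [u] gives uniformity in x. *)
Lemma CT0_comp (f : R -> R) c u : (forall y, c <= y -> continuity_pt f y) ->
  CT0 u -> (forall t, in_time t -> forall x, c <= u x t) -> CT0 (fun x t => f (u x t)).
Proof.
  intros Hf Gu Hlow.
  destruct (CT0_bounded u Gu) as (B & _ & HB).
  destruct Gu as (Hp & Hc & Hu). split; [| split].
  - intros t Ht x. rewrite Hp; auto.
  - intros t Ht x. apply (continuous_comp (fun y => u y t) f); auto.
    apply continuity_pt_filterlim, Hf; auto.
  - intros t0 Ht0 eps Heps.
    destruct (Heine f (fun y => c <= y <= B) (compact_P3 c B)
      ltac:(intros y Hy; apply Hf, Hy) (mkposreal eps Heps)) as (dl & Hdl).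
    destruct (Hu t0 Ht0 (dl / 2) ltac:(pose proof (cond_pos dl); lra)) as (d & Hd & Hd').
    exists d; split; [exact Hd |]. intros t Ht Htt x.
    pose proof (Rle_abs (u x t)). pose proof (Rle_abs (u x t0)).
    pose proof (HB t Ht x). pose proof (Hlow t Ht x).
    pose proof (HB t0 Ht0 x). pose proof (Hlow t0 Ht0 x).
    apply Rlt_le, (Hdl (u x t) (u x t0)); [lra | lra |].
    specialize (Hd' t Ht Htt x). pose proof (cond_pos dl); lra.
Qed.

Lemma CT_CT0 k u : CT k u -> CT0 u.
Proof. destruct k; simpl; tauto. Qed.

Lemma CT_pred k u : CT (S k) u -> CT k u.
Proof.
  revert u; induction k as [| k IH]; intros u H; [apply H |].
  destruct H as (H0 & ux & Hd & Hk). split; [exact H0 |]. exists ux; split; auto.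
Qed.

Lemma CT_le k m u : (k <= m)%nat -> CT m u -> CT k u.
Proof. induction 1; auto using CT_pred. Qed.

Lemma CT_ext k u v : (forall x t, in_time t -> u x t = v x t) -> CT k u -> CT k v.
Proof.
  destruct k as [| k]; intros He H; [exact (CT0_ext u v He H) |].
  destruct H as (H0 & ux & Hd & Hk). split; [exact (CT0_ext u v He H0) |].
  exists ux; split; [| exact Hk]. intros t Ht x.
  apply (is_derive_ext (fun y => u y t)); [intros y; apply He |]; auto.
Qed.

Lemma CT_plus k u v : CT k u -> CT k v -> CT k (fun x t => u x t + v x t).
Proof.
  revert u v; induction k as [| k IH]; intros u v Hu Hv; [apply CT0_plus; auto |].
  destruct Hu as (H0 & ux & Hd & Hk), Hv as (H0' & vx & Hd' & Hk').
  split; [apply CT0_plus; auto |]. exists (fun x t => ux x t + vx x t). split.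
  - intros t Ht x. apply (is_derive_plus_R (fun y => u y t) (fun y => v y t)); auto.
  - apply IH; auto.
Qed.

Lemma CT_mult k u v : CT k u -> CT k v -> CT k (fun x t => u x t * v x t).
Proof.
  revert u v; induction k as [| k IH]; intros u v Hu Hv; [apply CT0_mult; auto |].
  pose proof (CT_pred _ _ Hu) as Hu'. pose proof (CT_pred _ _ Hv) as Hv'.
  destruct Hu as (H0 & ux & Hd & Hk), Hv as (H0' & vx & Hd' & Hk').
  split; [apply CT0_mult; auto |].
  exists (fun x t => ux x t * v x t + u x t * vx x t). split.
  - intros t Ht x. apply (is_derive_mult_R (fun y => u y t) (fun y => v y t)); auto.
  - apply CT_plus; apply IH; auto.
Qed.

Lemma CT_tfun k (c : R -> R) : CT0 (fun _ t => c t) -> CT k (fun _ t => c t).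
Proof.
  revert c; induction k as [| k IH]; intros c Hc; [exact Hc |].
  split; [exact Hc |]. exists (fun _ _ => 0). split.
  - intros t Ht x. apply is_derive_const_R.
  - apply (IH (fun _ => 0)), CT0_const.
Qed.

Lemma CT_const k c : CT k (fun _ _ => c).
Proof. apply (CT_tfun k (fun _ => c)), CT0_const. Qed.

Lemma CT_scal k c u : CT k u -> CT k (fun x t => c * u x t).
Proof. intros H. apply (CT_mult k (fun _ _ => c)); [apply CT_const | exact H]. Qed.

Lemma CT_opp k u : CT k u -> CT k (fun x t => - u x t).
Proof.
  intros H. apply (CT_ext k (fun x t => -1 * u x t)); [intros; ring |]. apply CT_scal, H.
Qed.

Lemma CT_inv k u c : 0 < c -> (forall t, in_time t -> forall x, c <= u x t) ->
  CT k u -> CT k (fun x t => / u x t).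
Proof.
  intros Hc. revert u; induction k as [| k IH]; intros u Hl Hu.
  all: assert (G0 : CT0 (fun x t => / u x t))
    by (apply (CT0_comp Rinv c); [| exact (CT_CT0 _ _ Hu) | exact Hl]; intros y Hy;
        exact (is_derive_continuity_pt _ _ _
                 (is_derive_inv (fun x => x) y 1 (is_derive_id y) ltac:(simpl; lra)))).
  - exact G0.
  - pose proof (CT_pred _ _ Hu) as Hu'. destruct Hu as (_ & ux & Hd & Hk).
    split; [exact G0 |]. exists (fun x t => - ux x t * (/ u x t * / u x t)). split.
    + intros t Ht x. specialize (Hl t Ht x).
      replace (- ux x t * (/ u x t * / u x t)) with (- ux x t / u x t ^ 2) by (field; lra).
      apply (is_derive_inv (fun y => u y t)); [apply Hd; auto | lra].
    + apply CT_mult; [apply CT_opp; exact Hk |]. apply CT_mult; apply IH; auto.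
Qed.

Lemma CT_ln k u c : 0 < c -> (forall t, in_time t -> forall x, c <= u x t) ->
  CT k u -> CT k (fun x t => ln (u x t)).
Proof.
  intros Hc Hl Hu.
  assert (G0 : CT0 (fun x t => ln (u x t))).
  { apply (CT0_comp ln c); [| exact (CT_CT0 _ _ Hu) | exact Hl]. intros y Hy.
    apply (is_derive_continuity_pt _ _ _ (is_derive_ln y ltac:(lra))). }
  destruct k as [| k]; [exact G0 |].
  pose proof (CT_pred _ _ Hu) as Hu'. destruct Hu as (_ & ux & Hd & Hk).
  split; [exact G0 |]. exists (fun x t => / u x t * ux x t). split.
  - intros t Ht x. specialize (Hl t Ht x).
    apply (is_derive_comp_R ln (fun y => u y t)); [apply is_derive_ln; lra | apply Hd; auto].
  - apply CT_mult; [apply (CT_inv k u c) |]; auto.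
Qed.

Lemma CT_exp k u : CT k u -> CT k (fun x t => exp (u x t)).
Proof.
  revert u; induction k as [| k IH]; intros u Hu.
  - destruct (CT0_bounded u Hu) as (B & _ & HB).
    apply (CT0_comp exp (- B)); [| exact Hu |].
    + intros y _. apply (is_derive_continuity_pt _ _ _ (is_derive_exp y)).
    + intros t Ht x. specialize (HB t Ht x). apply Rabs_le_between in HB. lra.
  - pose proof (CT_pred _ _ Hu) as Hu'.
    split; [exact (CT_CT0 _ _ (IH u Hu')) |].
    destruct Hu as (_ & ux & Hd & Hk). exists (fun x t => exp (u x t) * ux x t). split.
    + intros t Ht x. apply (is_derive_comp_R exp (fun y => u y t));
        [apply is_derive_exp | apply Hd; auto].
    + apply CT_mult; auto.
Qed.

Definition primitive (h : R -> R -> R) (x t : R) : R := RInt (fun y => h y t) 0 x.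

Definition center (u : R -> R -> R) (x t : R) : R := u x t - / M * primitive u M t.

Lemma ex_RInt_slice h t u v : CT0 h -> in_time t -> ex_RInt (fun y => h y t) u v.
Proof. intros (_ & Hc & _) Ht. apply ex_RInt_continuous_R. intros; apply Hc, Ht. Qed.

Lemma is_derive_primitive h t x : CT0 h -> in_time t ->
  is_derive (fun z => primitive h z t) x (h x t).
Proof.
  intros Gh Ht. apply (is_derive_RInt (fun y => h y t) (fun z => primitive h z t) 0 x).
  - apply filter_forall. intros z.
    apply (RInt_correct (V := R_CompleteNormedModule)), ex_RInt_slice; auto.
  - destruct Gh as (_ & Hc & _). apply Hc, Ht.
Qed.

Lemma primitive_periodic h t : CT0 h -> in_time t -> primitive h M t = 0 ->
  forall x, primitive h (x + M) t = primitive h x t.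
Proof.
  intros Gh Ht H0 x.
  set (D := fun z => primitive h (z + M) t - primitive h z t).
  assert (HD : forall z, is_derive D z 0).
  { intros z. unfold D. replace 0 with (h (z + M) t * 1 + - h z t)
      by (destruct Gh as (Hp & _); rewrite Hp by exact Ht; ring).
    apply (is_derive_plus_R (fun z => primitive h (z + M) t) (fun z => - primitive h z t)).
    - apply (is_derive_comp_R (fun z => primitive h z t) (fun z => z + M)).
      + apply is_derive_primitive; auto.
      + replace 1 with (1 + 0) by ring.
        apply (is_derive_plus_R (fun z => z) (fun _ => M)); [apply is_derive_id_R |].
        apply is_derive_const_R.
    - apply is_derive_opp_R, is_derive_primitive; auto. }
  destruct (MVT_gen D 0 x (fun _ => 0)) as (c & _ & Hc).
  - intros; auto.
  - intros; eapply is_derive_continuity_pt; eauto.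
  - assert (HDx : D x = D 0) by lra. unfold D, primitive in HDx.
    rewrite Rplus_0_l, RInt_point in HDx. unfold primitive in H0. rewrite H0 in HDx.
    change (zero : R) with 0 in HDx. unfold primitive. lra.
Qed.

Lemma primitive_tdiff_bound h t t0 x K : CT0 h -> in_time t -> in_time t0 ->
  (forall y, Rabs (h y t - h y t0) <= K) ->
  Rabs (primitive h x t - primitive h x t0) <= Rabs x * K.
Proof.
  intros Gh Ht Ht0 HK. unfold primitive. rewrite <- RInt_minus_R by (apply ex_RInt_slice; auto).
  apply abs_RInt_0_le_const; [| exact HK]. intros u v.
  apply (ex_RInt_minus (V := R_NormedModule) (fun y => h y t) (fun y => h y t0));
    apply ex_RInt_slice; auto.
Qed.

Lemma unif_tcont_primitive_at h x0 : CT0 h -> unif_tcont (fun _ t => primitive h x0 t).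
Proof.
  intros Gh t0 Ht0 eps Heps. pose proof (Rabs_pos x0).
  pose proof (proj2 (proj2 Gh)) as Hu.
  destruct (Hu t0 Ht0 (eps / (Rabs x0 + 1)) ltac:(apply Rdiv_lt_0_compat; lra))
    as (d & Hd & Hd').
  exists d; split; [exact Hd |]. intros t Ht Htt _.
  eapply Rle_trans; [apply primitive_tdiff_bound; auto |].
  replace eps with ((Rabs x0 + 1) * (eps / (Rabs x0 + 1))) at 2 by (field; lra).
  apply Rmult_le_compat_r; [apply Rlt_le, Rdiv_lt_0_compat |]; lra.
Qed.

Lemma CT_primitive k h : CT k h -> (forall t, in_time t -> primitive h M t = 0) ->
  CT (S k) (primitive h).
Proof.
  intros Gk H0. pose proof (CT_CT0 k h Gk) as Gh.
  split; [split; [| split] |].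
  - intros t Ht x. apply primitive_periodic; auto.
  - intros t Ht x. eapply is_derive_continuous_R, is_derive_primitive; auto.
  - intros t0 Ht0 eps Heps. pose proof (proj2 (proj2 Gh)) as Hu.
    destruct (Hu t0 Ht0 (eps / M) ltac:(apply Rdiv_lt_0_compat; lra)) as (d & Hd & Hd').
    exists d; split; [exact Hd |]. intros t Ht Htt x.
    destruct (periodic_reduce M HM x) as (y & j & Hy & ->).
    rewrite !(periodic_shift M (fun x => primitive h x _))
      by (intro; apply primitive_periodic; auto).
    eapply Rle_trans; [apply (primitive_tdiff_bound h t t0 y (eps / M)); auto |].
    rewrite Rabs_pos_eq by lra.
    replace eps with (M * (eps / M)) at 2 by (field; lra).
    apply Rmult_le_compat_r; [apply Rlt_le, Rdiv_lt_0_compat |]; lra.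
  - exists h. split; [| exact Gk]. intros t Ht x. apply is_derive_primitive; auto.
Qed.

Lemma primitive_center_period u t : CT0 u -> in_time t -> primitive (center u) M t = 0.
Proof.
  intros Gu Ht. unfold primitive, center.
  rewrite (RInt_minus_R (fun y => u y t) (fun _ => / M * primitive u M t)).
  - rewrite RInt_const. change (scal (M - 0) (/ M * primitive u M t))
      with ((M - 0) * (/ M * primitive u M t)).
    unfold primitive. field. lra.
  - apply ex_RInt_slice; auto.
  - apply ex_RInt_continuous_R. intros; apply continuous_const.
Qed.

Lemma CT_center k u : CT k u -> CT k (center u).
Proof.
  intros Gu. apply (CT_plus k u (fun _ t => - (/ M * primitive u M t))); [exact Gu |].
  apply (CT_tfun k (fun t => - (/ M * primitive u M t))).
  apply (CT0_ext (fun _ t => -1 * (/ M * primitive u M t))); [intros; ring |].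
  apply (CT_scal 0), (CT_scal 0), CT0_tfun, unif_tcont_primitive_at, (CT_CT0 k), Gu.
Qed.

Lemma Derive_n_periodic (f : R -> R) : periodic M f ->
  forall j x, Derive_n f j (x + M) = Derive_n f j x.
Proof. intros Hp j x. rewrite <- Derive_n_comp_trans. apply Derive_n_ext, Hp. Qed.

Lemma Derive_n_S_fun (f : R -> R) j : Derive_n f (S j) = Derive_n (Derive f) j.
Proof.
  apply functional_extensionality; intros x.
  replace (S j) with (j + 1)%nat by lia. rewrite <- Derive_n_comp. reflexivity.
Qed.

Lemma ex_derive_n_SS (f : R -> R) j x :
  ex_derive_n f (S (S j)) x <-> ex_derive_n (Derive f) (S j) x.
Proof. simpl. rewrite <- Derive_n_S_fun. reflexivity. Qed.

Lemma CT_is_derive k u t x : CT (S k) u -> in_time t ->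
  is_derive (fun y => u y t) x (Derive (fun y => u y t) x).
Proof. intros (_ & ux & Hd & _) Ht. apply Derive_correct. exists (ux x t). apply Hd, Ht. Qed.

Lemma CT_CtCk k u : CT k u -> CtCk M T k u.
Proof.
  revert u; induction k as [| k IH]; intros u H.
  - destruct H as (Hp & Hc & Hu). split.
    + intros t Ht. split; [| split]; [intro; apply Hp, Ht | | apply Hc, Ht].
      intros j Hj x. replace j with 0%nat by lia. exact I.
    + intros j Hj. replace j with 0%nat by lia. exact Hu.
  - destruct H as ((Hp & Hc & Hu) & ux & Hd & Hk). destruct (IH ux Hk) as (Hs & Hcu).
    assert (Hder : forall t, in_time t -> Derive (fun y => u y t) = (fun y => ux y t)).
    { intros t Ht. apply functional_extensionality; intros y.
      apply is_derive_unique, Hd, Ht. }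
    split.
    + intros t Ht. split; [| split].
      * intros x; apply Hp, Ht.
      * intros [| [| j]] Hj x; [exact I | exists (ux x t); apply Hd, Ht |].
        apply ex_derive_n_SS. rewrite Hder by exact Ht. apply (Hs t Ht). lia.
      * intros x. rewrite Derive_n_S_fun, Hder by exact Ht. apply (Hs t Ht).
    + intros [| j] Hj t0 Ht0 eps Heps; [apply Hu; auto |].
      destruct (Hcu j ltac:(lia) t0 Ht0 eps Heps) as (d & Hd0 & Hd').
      exists d; split; [exact Hd0 |]. intros t Ht Htt x.
      rewrite !Derive_n_S_fun, !Hder by assumption. apply Hd'; auto.
Qed.

Lemma CtCk_CT k u : CtCk M T k u -> CT k u.
Proof.
  revert u; induction k as [| k IH]; intros u (Hs & Hcu).
  { split; [| split];
      [intros t Ht x; exact (proj1 (Hs t Ht) x) | intros t Ht; exact (proj2 (proj2 (Hs t Ht))) |].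
    intros t0 Ht0 eps Heps. apply (Hcu 0%nat ltac:(lia) t0 Ht0 eps Heps). }
  assert (Hex : forall t, in_time t -> forall x,
             is_derive (fun y => u y t) x (Derive (fun y => u y t) x)).
  { intros t Ht x. apply Derive_correct. apply (proj1 (proj2 (Hs t Ht)) 1%nat); lia. }
  split; [split; [| split] |].
  - intros t Ht x. exact (proj1 (Hs t Ht) x).
  - intros t Ht x. exact (is_derive_continuous_R _ _ _ (Hex t Ht x)).
  - intros t0 Ht0 eps Heps. apply (Hcu 0%nat ltac:(lia) t0 Ht0 eps Heps).
  - exists (fun x t => Derive (fun y => u y t) x). split; [exact Hex |].
    apply IH. split.
    + intros t Ht. destruct (Hs t Ht) as (Hp & He & Hc). split; [| split].
      * intros x. apply (Derive_n_periodic (fun y => u y t) Hp 1%nat x).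
      * intros [| j] Hj x; [exact I |]. apply (proj1 (ex_derive_n_SS _ j x)), He. lia.
      * intros x. rewrite <- Derive_n_S_fun. apply Hc.
    + intros j Hj t0 Ht0 eps Heps.
      destruct (Hcu (S j) ltac:(lia) t0 Ht0 eps Heps) as (d & Hd0 & Hd').
      exists d; split; [exact Hd0 |]. intros t Ht Htt x.
      rewrite <- !Derive_n_S_fun. apply Hd'; auto.
Qed.

(** * Derivatives in time *)

Definition is_tderive (f : R -> R) (t l : R) : Prop :=
  forall eps, 0 < eps -> exists delta, 0 < delta /\
    forall s, in_time s -> Rabs (s - t) < delta ->
      Rabs (f s - f t - l * (s - t)) <= eps * Rabs (s - t).

Definition has_tderiv (u ut : R -> R -> R) : Prop :=
  forall x t, in_time t -> is_tderive (fun s => u x s) t (ut x t).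

Lemma tderiv_iff u ut : tderiv T u ut <-> has_tderiv u ut.
Proof.
  split; intros H x t Ht eps Heps; destruct (H x t Ht eps Heps) as (d & Hd & Hd');
    exists d; split; auto; intros s Hs Hst.
  - destruct (Req_dec s t) as [-> | Hne].
    + rewrite !Rminus_diag, Rmult_0_r, Rminus_0_r, Rabs_R0. lra.
    + replace (u x s - u x t - ut x t * (s - t))
        with (((u x s - u x t) / (s - t) - ut x t) * (s - t)) by (field; lra).
      rewrite Rabs_mult. apply Rmult_le_compat_r; [apply Rabs_pos |].
      apply Hd'; auto. split; [apply Rabs_pos_lt; lra | exact Hst].
  - destruct Hst as (Hst0 & Hst).
    assert (Hne : s - t <> 0) by (intros E; rewrite E, Rabs_R0 in Hst0; lra).
    replace ((u x s - u x t) / (s - t) - ut x t)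
      with ((u x s - u x t - ut x t * (s - t)) / (s - t)) by (field; exact Hne).
    unfold Rdiv. rewrite Rabs_mult, Rabs_inv.
    apply Rmult_le_reg_r with (Rabs (s - t)); [exact Hst0 |].
    rewrite Rmult_assoc, Rinv_l by lra. specialize (Hd' s Hs Hst). lra.
Qed.

Lemma is_tderive_lipschitz f t l : is_tderive f t l -> exists delta, 0 < delta /\
  forall s, in_time s -> Rabs (s - t) < delta -> Rabs (f s - f t) <= (Rabs l + 1) * Rabs (s - t).
Proof.
  intros H. destruct (H 1 Rlt_0_1) as (d & Hd & Hd'). exists d; split; [exact Hd |].
  intros s Hs Hst. specialize (Hd' s Hs Hst).
  replace (f s - f t) with ((f s - f t - l * (s - t)) + l * (s - t)) by ring.
  eapply Rle_trans; [apply Rabs_triang |]. rewrite Rabs_mult. lra.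
Qed.

Lemma is_tderive_continuous f t l : is_tderive f t l -> forall eps, 0 < eps ->
  exists delta, 0 < delta /\ forall s, in_time s -> Rabs (s - t) < delta -> Rabs (f s - f t) <= eps.
Proof.
  intros H eps Heps. destruct (is_tderive_lipschitz f t l H) as (d & Hd & Hd').
  set (K := Rabs l + 1). assert (HK : 0 < K) by (unfold K; pose proof (Rabs_pos l); lra).
  exists (Rmin d (eps / K)). split; [apply Rmin_pos; [| apply Rdiv_lt_0_compat]; lra |].
  intros s Hs Hst. pose proof (Rmin_l d (eps / K)). pose proof (Rmin_r d (eps / K)).
  eapply Rle_trans; [apply Hd'; auto; lra |]. fold K.
  replace eps with (K * (eps / K)) by (field; lra).
  apply Rmult_le_compat_l; lra.
Qed.

Lemma is_tderive_ext f g t l l' : (forall s, in_time s -> f s = g s) -> in_time t -> l = l' ->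
  is_tderive f t l -> is_tderive g t l'.
Proof.
  intros Hfg Ht <- H eps Heps. destruct (H eps Heps) as (d & Hd & Hd').
  exists d; split; [exact Hd |]. intros s Hs Hst. rewrite <- !Hfg by assumption. auto.
Qed.

Lemma is_tderive_plus f g t lf lg : is_tderive f t lf -> is_tderive g t lg ->
  is_tderive (fun s => f s + g s) t (lf + lg).
Proof.
  intros Hf Hg eps Heps.
  destruct (Hf (eps / 2) ltac:(lra)) as (d1 & Hd1 & Hd1').
  destruct (Hg (eps / 2) ltac:(lra)) as (d2 & Hd2 & Hd2').
  exists (Rmin d1 d2); split; [apply Rmin_pos; auto |]. intros s Hs Hst.
  pose proof (Rmin_l d1 d2). pose proof (Rmin_r d1 d2).
  specialize (Hd1' s Hs ltac:(lra)). specialize (Hd2' s Hs ltac:(lra)).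
  replace (f s + g s - (f t + g t) - (lf + lg) * (s - t)) with
    ((f s - f t - lf * (s - t)) + (g s - g t - lg * (s - t))) by ring.
  eapply Rle_trans; [apply Rabs_triang | lra].
Qed.

(* Chain rule: split [phi (f s) - phi (f t) - dphi l (s - t)] into the error of the
   linear approximation of [phi] at [f t], controlled through the Lipschitz bound on [f],
   plus [dphi] times the error for [f]. *)
Lemma is_tderive_comp (phi f : R -> R) (t dphi l : R) :
  is_derive phi (f t) dphi -> is_tderive f t l ->
  is_tderive (fun s => phi (f s)) t (dphi * l).
Proof.
  intros Hphi H eps Heps.
  set (K := Rabs l + 1). set (L := Rabs dphi + 1).
  assert (HK : 0 < K) by (unfold K; pose proof (Rabs_pos l); lra).
  assert (HL : 0 < L) by (unfold L; pose proof (Rabs_pos dphi); lra).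
  destruct (is_derive_approx phi (f t) dphi Hphi (eps / (2 * K))
    ltac:(apply Rdiv_lt_0_compat; lra)) as (eta & Heta & Heta').
  destruct (H (eps / (2 * L)) ltac:(apply Rdiv_lt_0_compat; lra)) as (d2 & Hd2 & Hd2').
  destruct (is_tderive_continuous f t l H (eta / 2) ltac:(lra)) as (d3 & Hd3 & Hd3').
  destruct (is_tderive_lipschitz f t l H) as (d4 & Hd4 & Hd4').
  exists (Rmin d2 (Rmin d3 d4)). split; [repeat apply Rmin_pos; auto |]. intros s Hs Hst.
  pose proof (Rmin_l d2 (Rmin d3 d4)). pose proof (Rmin_r d2 (Rmin d3 d4)).
  pose proof (Rmin_l d3 d4). pose proof (Rmin_r d3 d4).
  specialize (Hd2' s Hs ltac:(lra)). specialize (Hd3' s Hs ltac:(lra)).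
  specialize (Hd4' s Hs ltac:(lra)). specialize (Heta' (f s) ltac:(lra)). fold K in Hd4'.
  set (d := Rabs (s - t)) in *. assert (Hd0 : 0 <= d) by apply Rabs_pos.
  replace (phi (f s) - phi (f t) - dphi * l * (s - t)) with
    ((phi (f s) - phi (f t) - dphi * (f s - f t)) + dphi * (f s - f t - l * (s - t)))
    by ring.
  eapply Rle_trans; [apply Rabs_triang |].
  assert (T1 : eps / (2 * K) * Rabs (f s - f t) <= eps / 2 * d).
  { apply Rle_trans with (eps / (2 * K) * (K * d)).
    - apply Rmult_le_compat_l; [apply Rlt_le, Rdiv_lt_0_compat |]; lra.
    - right; field; lra. }
  assert (T2 : Rabs (dphi * (f s - f t - l * (s - t))) <= eps / 2 * d).
  { rewrite Rabs_mult. apply Rle_trans with (L * (eps / (2 * L) * d)).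
    - apply Rmult_le_compat; try apply Rabs_pos; [unfold L |]; lra.
    - right; field; lra. }
  lra.
Qed.

Lemma is_tderive_scal c f t l : is_tderive f t l -> is_tderive (fun s => c * f s) t (c * l).
Proof.
  intros H. apply (is_tderive_comp (fun y => c * y)); [| exact H].
  pose proof (is_derive_scal (fun y => y) (f t) c 1 (is_derive_id_R _)) as Hc.
  rewrite Rmult_1_r in Hc. exact Hc.
Qed.

(* Polarisation: [f g = ((f + g)^2 - (f - g)^2) / 4]. *)
Lemma is_tderive_mult f g t lf lg : in_time t -> is_tderive f t lf -> is_tderive g t lg ->
  is_tderive (fun s => f s * g s) t (lf * g t + f t * lg).
Proof.
  intros Ht Hf Hg.
  assert (Hsq : forall h lh, is_tderive h t lh ->
            is_tderive (fun s => h s * h s) t (2 * h t * lh)).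
  { intros h lh Hh. apply (is_tderive_comp (fun y => y * y)); [| exact Hh].
    replace (2 * h t) with (1 * h t + h t * 1) by ring.
    apply (is_derive_mult_R (fun y => y) (fun y => y)); apply is_derive_id_R. }
  assert (Hopp : is_tderive (fun s => -1 * g s) t (-1 * lg)) by (apply is_tderive_scal, Hg).
  apply (is_tderive_ext (fun s => / 4 * ((f s + g s) * (f s + g s))
                                  + - / 4 * ((f s + -1 * g s) * (f s + -1 * g s))) _ t
           (/ 4 * (2 * (f t + g t) * (lf + lg))
            + - / 4 * (2 * (f t + -1 * g t) * (lf + -1 * lg))));
    [intros; field | exact Ht | field |].
  apply is_tderive_plus; apply is_tderive_scal, Hsq, is_tderive_plus; auto.
Qed.

Lemma is_tderive_linear c t : is_tderive (fun s => c * s) t c.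
Proof.
  intros eps Heps. exists 1; split; [lra |]. intros s _ _.
  replace (c * s - c * t - c * (s - t)) with 0 by ring. rewrite Rabs_R0.
  apply Rmult_le_pos; [lra | apply Rabs_pos].
Qed.

Definition clamp (c : R) : R := Rmax 0 (Rmin T c).

Lemma clamp_id c : in_time c -> clamp c = c.
Proof. unfold clamp, Rmax, Rmin; intros; repeat destruct Rle_dec; lra. Qed.

Lemma clamp_in_time c : in_time (clamp c).
Proof. unfold clamp, Rmax, Rmin; repeat destruct Rle_dec; lra. Qed.

Lemma clamp_dist c tau : in_time tau -> Rabs (clamp c - tau) <= Rabs (c - tau).
Proof.
  unfold clamp, Rmax, Rmin; intros; repeat destruct Rle_dec;
    unfold Rabs; repeat destruct Rcase_abs; lra.
Qed.

Lemma is_derive_clamp f tau l : 0 < tau < T -> is_tderive f tau l ->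
  is_derive (fun c => f (clamp c)) tau l.
Proof.
  intros Htau H. apply is_derive_Reals. intros eps Heps.
  destruct (H (eps / 2) ltac:(lra)) as (d & Hd & Hd').
  assert (Hpos : 0 < Rmin d (Rmin tau (T - tau))) by (repeat apply Rmin_pos; lra).
  exists (mkposreal _ Hpos). intros h Hh Hhd. simpl in Hhd.
  pose proof (Rmin_l d (Rmin tau (T - tau))). pose proof (Rmin_r d (Rmin tau (T - tau))).
  pose proof (Rmin_l tau (T - tau)). pose proof (Rmin_r tau (T - tau)).
  assert (Hin : in_time (tau + h)) by (apply Rabs_lt_between in Hhd; lra).
  rewrite !clamp_id by (auto; lra).
  specialize (Hd' (tau + h) Hin ltac:(replace (tau + h - tau) with h by ring; lra)).
  replace (tau + h - tau) with h in Hd' by ring.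
  replace ((f (tau + h) - f tau) / h - l) with ((f (tau + h) - f tau - l * h) / h)
    by (field; exact Hh).
  unfold Rdiv. rewrite Rabs_mult, Rabs_inv.
  assert (Hh0 : 0 < Rabs h) by (apply Rabs_pos_lt; exact Hh).
  apply Rmult_lt_reg_r with (Rabs h); [exact Hh0 |]. rewrite Rmult_assoc, Rinv_l by lra.
  nra.
Qed.

Lemma continuity_pt_clamp f tau l : in_time tau -> is_tderive f tau l ->
  continuity_pt (fun c => f (clamp c)) tau.
Proof.
  intros Htau H. unfold continuity_pt, continue_in, limit1_in, limit_in; simpl.
  intros eps Heps. destruct (is_tderive_continuous f tau l H (eps / 2) ltac:(lra))
    as (d & Hd & Hd').
  exists d; split; [exact Hd |]. intros c (_ & Hc). unfold R_dist in *.
  rewrite (clamp_id tau) by exact Htau.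
  pose proof (clamp_dist c tau Htau).
  specialize (Hd' (clamp c) (clamp_in_time c) ltac:(lra)). lra.
Qed.

(* [f] is only differentiable within [0,T]; composing with [clamp] brings it into the
   scope of [MVT_gen]. *)
Lemma is_tderive_mean_value f (l : R -> R) t s K : in_time t -> in_time s ->
  (forall tau, Rmin t s <= tau <= Rmax t s -> is_tderive f tau (l tau)) ->
  (forall tau, Rmin t s <= tau <= Rmax t s -> Rabs (l tau) <= K) ->
  Rabs (f s - f t) <= K * Rabs (s - t).
Proof.
  intros Ht Hs Hd Hl.
  assert (Hin : forall tau, Rmin t s <= tau <= Rmax t s -> in_time tau)
    by (unfold Rmin, Rmax; intros tau; destruct Rle_dec; lra).
  destruct (MVT_gen (fun c => f (clamp c)) t s l) as (c & Hc & Heq).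
  - intros tau Htau. apply is_derive_clamp; [| apply Hd; lra].
    unfold Rmin, Rmax in Htau; destruct Rle_dec; lra.
  - intros tau Htau. apply (continuity_pt_clamp f tau (l tau)); auto.
  - simpl in Heq. rewrite !clamp_id in Heq by assumption.
    rewrite Heq, Rabs_mult. apply Rmult_le_compat_r; [apply Rabs_pos | apply Hl, Hc].
Qed.

Lemma has_tderiv_ext u ut v vt : (forall x t, in_time t -> u x t = v x t) ->
  (forall x t, in_time t -> ut x t = vt x t) -> has_tderiv u ut -> has_tderiv v vt.
Proof.
  intros Hu Hut H x t Ht. apply (is_tderive_ext (fun s => u x s) _ t (ut x t)); auto.
Qed.

Lemma has_tderiv_plus u ut v vt : has_tderiv u ut -> has_tderiv v vt ->
  has_tderiv (fun x t => u x t + v x t) (fun x t => ut x t + vt x t).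
Proof. intros Hu Hv x t Ht. apply is_tderive_plus; auto. Qed.

Lemma has_tderiv_scal c u ut : has_tderiv u ut ->
  has_tderiv (fun x t => c * u x t) (fun x t => c * ut x t).
Proof. intros Hu x t Ht. apply is_tderive_scal; auto. Qed.

Lemma has_tderiv_mult u ut v vt : has_tderiv u ut -> has_tderiv v vt ->
  has_tderiv (fun x t => u x t * v x t) (fun x t => ut x t * v x t + u x t * vt x t).
Proof. intros Hu Hv x t Ht. apply is_tderive_mult; auto. Qed.

Lemma has_tderiv_comp (phi dphi : R -> R) (u ut : R -> R -> R) :
  (forall x t, in_time t -> is_derive phi (u x t) (dphi (u x t))) -> has_tderiv u ut ->
  has_tderiv (fun x t => phi (u x t)) (fun x t => dphi (u x t) * ut x t).
Proof. intros Hphi Hu x t Ht. apply is_tderive_comp; auto. Qed.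

(* The continuity of [ht] in time, uniform in x, makes the remainder uniform in x. *)
Lemma has_tderiv_unif h ht : CT0 ht -> has_tderiv h ht ->
  forall t, in_time t -> forall eps, 0 < eps -> exists delta, 0 < delta /\
    forall s, in_time s -> Rabs (s - t) < delta ->
      forall y, Rabs (h y s - h y t - ht y t * (s - t)) <= eps * Rabs (s - t).
Proof.
  intros (_ & _ & Hu) H t Ht eps Heps.
  destruct (Hu t Ht eps Heps) as (d & Hd & Hd'). exists d; split; [exact Hd |].
  intros s Hs Hst y.
  replace (h y s - h y t - ht y t * (s - t)) with
    ((h y s - ht y t * s) - (h y t - ht y t * t)) by ring.
  apply (is_tderive_mean_value (fun tau => h y tau - ht y t * tau)
           (fun tau => ht y tau - ht y t)); auto.
  - intros tau Htau.
    assert (Hin : in_time tau) by (unfold Rmin, Rmax in Htau; destruct Rle_dec; lra).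
    apply (is_tderive_ext (fun s => h y s + - ht y t * s) _ tau (ht y tau + - ht y t));
      [intros; ring | exact Hin | ring |].
    apply is_tderive_plus; [exact (H y tau Hin) | apply is_tderive_linear].
  - intros tau Htau.
    assert (Hin : in_time tau) by (unfold Rmin, Rmax in Htau; destruct Rle_dec; lra).
    apply Hd'; [exact Hin |]. unfold Rmin, Rmax in Htau; destruct Rle_dec;
      apply Rabs_lt_between in Hst; apply Rabs_lt_between; lra.
Qed.

Lemma has_tderiv_primitive h ht : CT0 h -> CT0 ht -> has_tderiv h ht ->
  has_tderiv (primitive h) (primitive ht).
Proof.
  intros Gh Ght H x t Ht eps Heps. pose proof (Rabs_pos x).
  set (e := eps / (Rabs x + 1)).
  destruct (has_tderiv_unif h ht Ght H t Ht e ltac:(apply Rdiv_lt_0_compat; lra))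
    as (d & Hd & Hd').
  exists d; split; [exact Hd |]. intros s Hs Hst.
  destruct Gh as (_ & Hch & _), Ght as (_ & Hcht & _).
  assert (Hcs : forall y, continuous (fun y => h y s) y) by (intros; apply Hch, Hs).
  assert (Hct : forall y, continuous (fun y => h y t) y) by (intros; apply Hch, Ht).
  assert (Hctt : forall y, continuous (fun y => ht y t) y) by (intros; apply Hcht, Ht).
  assert (Hdiff : forall y, continuous (fun y => h y s - h y t) y)
    by (intros; apply continuous_plus_R; [apply Hcs | apply continuous_opp_R, Hct]).
  assert (Hlin : forall y, continuous (fun y => ht y t * (s - t)) y)
    by (intros; apply continuous_mult_R; [apply Hctt | apply continuous_const]).
  assert (Hc : forall y, continuous (fun y => h y s - h y t - ht y t * (s - t)) y)
    by (intros; apply continuous_plus_R; [apply Hdiff | apply continuous_opp_R, Hlin]).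
  assert (E : primitive h x s - primitive h x t - primitive ht x t * (s - t)
              = RInt (fun y => h y s - h y t - ht y t * (s - t)) 0 x).
  { unfold primitive.
    rewrite (RInt_minus_R (fun y => h y s - h y t) (fun y => ht y t * (s - t))),
      (RInt_minus_R (fun y => h y s) (fun y => h y t)), (RInt_mult_const_r (fun y => ht y t))
      by (apply ex_RInt_continuous_R; assumption).
    reflexivity. }
  rewrite E. eapply Rle_trans.
  - apply (abs_RInt_0_le_const _ x (e * Rabs (s - t))); [| exact (Hd' s Hs Hst)].
    intros u v. apply ex_RInt_continuous_R, Hc.
  - rewrite <- Rmult_assoc. apply Rmult_le_compat_r; [apply Rabs_pos |].
    unfold e. replace eps with ((Rabs x + 1) * (eps / (Rabs x + 1))) at 2 by (field; lra).
    apply Rmult_le_compat_r; [apply Rlt_le, Rdiv_lt_0_compat |]; lra.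
Qed.

Lemma has_tderiv_center u ut : CT0 u -> CT0 ut -> has_tderiv u ut ->
  has_tderiv (center u) (center ut).
Proof.
  intros Gu Gut H. unfold center.
  apply (has_tderiv_plus u ut (fun _ t => - / M * primitive u M t)
                       (fun _ t => - / M * primitive ut M t)) in H.
  - eapply has_tderiv_ext; [| | exact H]; intros; cbv beta; ring.
  - apply (has_tderiv_scal (- / M) (fun _ t => primitive u M t)).
    intros x t Ht. apply (has_tderiv_primitive u ut Gu Gut H M t Ht).
Qed.

End SpaceTime.

(** * The function g_n *)

Section GnConditions.
Variables (M T : R) (n : nat) (a b at_ bt : R -> R -> R) (a0 : R).
Hypotheses (HM : 0 < M) (HT : 0 < T).
Hypotheses (Ha : CT M T (n + 3) a) (Hat : CT M T n at_) (Ha_t : has_tderiv T a at_).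
Hypotheses (Hb : CT M T (n + 2) b) (Hbt : CT M T n bt) (Hb_t : has_tderiv T b bt).
Hypotheses (Ha0 : 0 < a0) (Ha_low : forall t, 0 <= t <= T -> forall x, a0 <= a x t).

Local Notation in_time t := (0 <= t <= T).
Local Notation p := (1/2 - INR n / 3).
Local Notation ratio := (fun x t => b x t / a x t).
Local Notation h := (center M ratio).

Lemma a_pos x t : in_time t -> 0 < a x t.
Proof. intros Ht. specialize (Ha_low t Ht x). lra. Qed.

Lemma CT_inv_a k : (k <= n + 3)%nat -> CT M T k (fun x t => / a x t).
Proof. intros Hk. apply (CT_inv M T HM HT k a a0 Ha0), (CT_le M T k (n + 3)); auto. Qed.

Lemma CT_ratio : CT M T (n + 2) ratio.
Proof. apply (CT_mult M T HM HT _ b (fun x t => / a x t)); [exact Hb | apply CT_inv_a; lia]. Qed.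

Lemma deltabar_eq t : in_time t -> deltabar M a b t = / M * primitive ratio M t.
Proof.
  intros Ht. unfold deltabar, primitive. f_equal. apply RInt_ext. intros y _.
  rewrite Rabs_pos_eq; [reflexivity | apply Rlt_le, a_pos, Ht].
Qed.

Lemma gn_eq x t : in_time t ->
  gn M n a b x t = exp (p * ln (a x t)) * exp (- (1/3) * primitive h x t).
Proof.
  intros Ht. unfold gn, Rpower, primitive. do 3 f_equal. apply RInt_ext. intros y _.
  unfold center. rewrite deltabar_eq by exact Ht. reflexivity.
Qed.

Lemma CT_primitive_h : CT M T (n + 3) (primitive h).
Proof.
  replace (n + 3)%nat with (S (n + 2)) by lia.
  apply (CT_primitive M T HM); [exact (CT_center M T HM HT _ _ CT_ratio) |].
  intros t Ht. exact (primitive_center_period M T HM _ t (CT_CT0 M T _ _ CT_ratio) Ht).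
Qed.

Lemma CT_gn_factor_a : CT M T (n + 3) (fun x t => exp (p * ln (a x t))).
Proof.
  apply (CT_exp M T HM HT _ (fun x t => p * ln (a x t))).
  apply (CT_scal M T HM HT), (CT_ln M T HM HT _ a a0); assumption.
Qed.

Lemma CT_gn_factor_h : CT M T (n + 3) (fun x t => exp (- (1/3) * primitive h x t)).
Proof.
  apply (CT_exp M T HM HT _ (fun x t => - (1/3) * primitive h x t)).
  apply (CT_scal M T HM HT), CT_primitive_h.
Qed.

Lemma CT_gn : CT M T (n + 3) (gn M n a b).
Proof.
  apply (CT_ext M T _ (fun x t => exp (p * ln (a x t)) * exp (- (1/3) * primitive h x t))).
  - intros x t Ht. symmetry. apply gn_eq, Ht.
  - apply (CT_mult M T HM HT); [exact CT_gn_factor_a | exact CT_gn_factor_h].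
Qed.

Lemma gn_bounded : exists kg, 1 < kg /\
  forall x t, in_time t -> / kg <= gn M n a b x t <= kg.
Proof.
  assert (GL : CT0 M T (fun x t => p * ln (a x t) + - (1/3) * primitive h x t)).
  { apply (CT0_plus M T); apply (CT_CT0 M T (n + 3)).
    - apply (CT_scal M T HM HT), (CT_ln M T HM HT _ a a0); assumption.
    - apply (CT_scal M T HM HT), CT_primitive_h. }
  destruct (CT0_bounded M T HM HT _ GL) as (B & HB & HL).
  exists (exp B). split; [rewrite <- exp_0; apply exp_increasing, HB |].
  intros x t Ht. rewrite gn_eq, <- exp_plus, <- exp_Ropp by exact Ht.
  specialize (HL t Ht x). apply Rabs_le_between in HL. cbv beta in HL.
  assert (Hmono : forall u v, u <= v -> exp u <= exp v)
    by (intros u v [Huv | ->]; [apply Rlt_le, exp_increasing, Huv | apply Rle_refl]).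
  split; apply Hmono; lra.
Qed.

Local Notation ratio_t :=
  (fun x t => bt x t * / a x t + b x t * (- (/ a x t * / a x t) * at_ x t)).

Lemma has_tderiv_ratio : has_tderiv T ratio ratio_t.
Proof.
  apply (has_tderiv_mult T b bt (fun x t => / a x t)); [exact Hb_t |].
  apply (has_tderiv_comp T Rinv (fun y => - (/ y * / y)) a at_); [| exact Ha_t].
  intros x t Ht. pose proof (a_pos x t Ht).
  replace (- (/ a x t * / a x t)) with (- 1 / a x t ^ 2) by (field; lra).
  apply (is_derive_inv (fun y => y)); [apply is_derive_id_R | simpl; lra].
Qed.

Lemma CT_ratio_t : CT M T n ratio_t.
Proof.
  assert (Hia : CT M T n (fun x t => / a x t)) by (apply CT_inv_a; lia).
  apply (CT_plus M T); apply (CT_mult M T HM HT); try assumption.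
  - apply (CT_le M T n (n + 2)); [lia | exact Hb].
  - apply (CT_mult M T HM HT); [| exact Hat].
    apply (CT_opp M T HM HT), (CT_mult M T HM HT); exact Hia.
Qed.

Lemma gn_tderiv : exists gt, has_tderiv T (gn M n a b) gt /\ CT M T n gt.
Proof.
  set (ht := center M ratio_t).
  pose proof (CT_CT0 M T _ _ CT_ratio) as G0r.
  pose proof (CT_CT0 M T _ _ CT_ratio_t) as G0rt.
  assert (Ght : CT M T n ht) by exact (CT_center M T HM HT _ _ CT_ratio_t).
  assert (Hh_t : has_tderiv T h ht)
    by exact (has_tderiv_center M T HT _ _ G0r G0rt has_tderiv_ratio).
  assert (HI_t : has_tderiv T (primitive h) (primitive ht)).
  { apply (has_tderiv_primitive M T HT); [| exact (CT_CT0 M T _ _ Ght) | exact Hh_t].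
    exact (CT_CT0 M T _ _ (CT_center M T HM HT _ _ CT_ratio)). }
  assert (GIt : CT M T n (primitive ht)).
  { apply (CT_le M T n (S n)); [lia |]. apply (CT_primitive M T HM); [exact Ght |].
    intros t Ht. exact (primitive_center_period M T HM _ t G0rt Ht). }
  assert (HA_t : has_tderiv T (fun x t => exp (p * ln (a x t)))
                   (fun x t => exp (p * ln (a x t)) * (p * (/ a x t * at_ x t)))).
  { apply (has_tderiv_comp T exp exp); [intros; apply is_derive_exp |].
    apply has_tderiv_scal, (has_tderiv_comp T ln Rinv); [| exact Ha_t].
    intros x t Ht. apply is_derive_ln, a_pos, Ht. }
  assert (HE_t : has_tderiv T (fun x t => exp (- (1/3) * primitive h x t))
                   (fun x t => exp (- (1/3) * primitive h x t) * (- (1/3) * primitive ht x t))).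
  { apply (has_tderiv_comp T exp exp); [intros; apply is_derive_exp |].
    apply has_tderiv_scal, HI_t. }
  eexists. split.
  - eapply has_tderiv_ext; [| | exact (has_tderiv_mult T _ _ _ _ HA_t HE_t)].
    + intros x t Ht. symmetry. apply gn_eq, Ht.
    + reflexivity.
  - pose proof (CT_le M T n (n + 3) _ ltac:(lia) CT_gn_factor_a) as GA.
    pose proof (CT_le M T n (n + 3) _ ltac:(lia) CT_gn_factor_h) as GE.
    pose proof (CT_inv_a n ltac:(lia)) as Gia.
    apply (CT_plus M T); apply (CT_mult M T HM HT); try assumption; apply (CT_mult M T HM HT);
      try assumption; apply (CT_scal M T HM HT); try assumption.
    apply (CT_mult M T HM HT); assumption.
Qed.

Lemma is_derive_gn x t : in_time t ->
  is_derive (fun y => gn M n a b y t) x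
    (gn M n a b x t * (p * (Derive (fun y => a y t) x / a x t) - / 3 * h x t)).
Proof.
  intros Ht. pose proof (a_pos x t Ht).
  assert (Hax : is_derive (fun y => a y t) x (Derive (fun y => a y t) x))
    by (apply (CT_is_derive M T 0), Ht; apply (CT_le M T 1 (n + 3)); [lia | exact Ha]).
  apply (is_derive_ext (fun y => exp (p * ln (a y t)) * exp (- (1/3) * primitive h y t))).
  { intros y. symmetry. apply gn_eq, Ht. }
  rewrite gn_eq by exact Ht.
  replace (exp (p * ln (a x t)) * exp (- (1/3) * primitive h x t)
           * (p * (Derive (fun y => a y t) x / a x t) - / 3 * h x t))
    with (exp (p * ln (a x t)) * (p * (/ a x t * Derive (fun y => a y t) x))
            * exp (- (1/3) * primitive h x t)
          + exp (p * ln (a x t)) * (exp (- (1/3) * primitive h x t) * (- (1/3) * h x t)))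
    by (field; lra).
  apply (is_derive_mult_R (fun y => exp (p * ln (a y t)))
                          (fun y => exp (- (1/3) * primitive h y t))).
  - apply (is_derive_comp_R exp (fun y => p * ln (a y t))); [apply is_derive_exp |].
    apply is_derive_scal, (is_derive_comp_R ln (fun y => a y t));
      [apply is_derive_ln; lra | exact Hax].
  - apply (is_derive_comp_R exp (fun y => - (1/3) * primitive h y t)); [apply is_derive_exp |].
    apply is_derive_scal, (is_derive_primitive M T); [| exact Ht].
    exact (CT_CT0 M T _ _ (CT_center M T HM HT _ _ CT_ratio)).
Qed.

Lemma gn_drift_eq x t : in_time t ->
  (3/2 - INR n) * Derive (fun y => a y t) x - b x t
  - 3 * a x t * (Derive (fun y => gn M n a b y t) x / gn M n a b x t)
  = - (a x t * deltabar M a b t).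
Proof.
  intros Ht. pose proof (a_pos x t Ht).
  assert (Hg : 0 < gn M n a b x t)
    by (rewrite gn_eq by exact Ht; apply Rmult_lt_0_compat; apply exp_pos).
  replace (Derive (fun y => gn M n a b y t) x)
    with (gn M n a b x t * (p * (Derive (fun y => a y t) x / a x t) - / 3 * h x t))
    by (symmetry; apply is_derive_unique, is_derive_gn, Ht).
  rewrite deltabar_eq by exact Ht. unfold center. field. lra.
Qed.

End GnConditions.

Theorem lemma3 (M T : R) (n : nat) (a b : R -> R -> R) (a0 : R) :
  0 < M -> 0 < T -> (4 <= n)%nat ->
  CtCk M T (n + 3) a ->
  (exists at_, tderiv T a at_ /\ CtCk M T n at_) ->
  CtCk M T (n + 2) b ->
  (exists bt, tderiv T b bt /\ CtCk M T n bt) ->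
  0 < a0 ->
  (forall x t, 0 <= x <= M -> 0 <= t <= T -> a0 <= a x t) ->
  (forall t, 0 <= t <= T -> 0 <= deltabar M a b t) ->
  (* (C1) *)
  (exists kg, 1 < kg /\
     forall x t, 0 <= x <= M -> 0 <= t <= T ->
       / kg <= gn M n a b x t <= kg) /\
  (* (C2) *)
  CtCk M T (n + 3) (gn M n a b) /\
  (exists gt, tderiv T (gn M n a b) gt /\ CtCk M T n gt) /\
  (* (C3) *)
  (forall t, 0 <= t <= T -> forall j, (j <= n)%nat ->
     Derive_n (fun y => gn M n a b y t) j 0 = Derive_n (fun y => gn M n a b y t) j M) /\
  (* (C4) *)
  (forall x t, 0 <= x <= M -> 0 <= t <= T ->
     (3/2 - INR n) * Derive (fun y => a y t) x - b x t
     - 3 * a x t * (Derive (fun y => gn M n a b y t) x / gn M n a b x t) <= 0).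
Proof.
  (* The argument works for every n. *)
  intros HM HT _ Ca (at_ & Ha_t & Cat) Cb (bt & Hb_t & Cbt) Ha0 Hlow Hdelta.
  apply CtCk_CT in Ca, Cat, Cb, Cbt. apply tderiv_iff in Ha_t, Hb_t.
  assert (Hlow' : forall t, 0 <= t <= T -> forall x, a0 <= a x t).
  { intros t Ht x. destruct (periodic_representative M (fun y => a y t) HM
      (proj1 (CT_CT0 M T _ _ Ca) t Ht) x) as (y & Hy & ->).
    apply Hlow; assumption. }
  pose proof (CT_gn M T n a b a0 HM HT Ca Cb Ha0 Hlow') as Cg.
  split; [| split; [| split; [| split]]].
  - destruct (gn_bounded M T n a b a0 HM HT Ca Cb Ha0 Hlow') as (kg & Hkg & Hg).
    exists kg. split; [exact Hkg | intros x t _ Ht; apply Hg, Ht].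
  - apply CT_CtCk, Cg.
  - destruct (gn_tderiv M T n a b at_ bt a0 HM HT Ca Cat Ha_t Cb Cbt Hb_t Ha0 Hlow')
      as (gt & Hg_t & Cgt).
    exists gt. split; [apply tderiv_iff, Hg_t | apply CT_CtCk, Cgt].
  - intros t Ht j _.
    pose proof (Derive_n_periodic M _ (proj1 (CT_CT0 M T _ _ Cg) t Ht) j 0) as Hper.
    rewrite Rplus_0_l in Hper. symmetry. exact Hper.
  - intros x t _ Ht. rewrite (gn_drift_eq M T n a b a0 HM HT Ca Cb Ha0 Hlow') by exact Ht.
    pose proof (a_pos T a a0 Ha0 Hlow' x t Ht). pose proof (Hdelta t Ht). nra.
Qed.
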